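(* For every Tychonoff space $X$, the following are equivalent: (1) $C_p(X)\models U_{fin}(\Gamma_f,\Gamma_f)$ for every $f\in C_p(X)$; (2) $X\models U_{fin}(\Gamma_F,\Gamma)$.
   Context: All spaces are Tychonoff; $C_p(X)$ is $C(X)$ with pointwise convergence topology. For $f\in C_p(X)$, $\Gamma_f$ is the family of infinite $A\subseteq C(X)$ with $f\notin A$ such that every neighbourhood of $f$ contains all but finitely many elements of $A$. $C_p(X)\models U_{fin}(\Gamma_f,\Gamma_f)$ means: for every sequence $(S_n)_{n\in\omega}$ of elements of $\Gamma_f$ there are finite $\mathcal F_n\subseteq S_n$ such that for every finite $K=\{x_1,\dots,x_k\}\subseteq X$ and $\varepsilon>0$ there is $n'$ such that for every $n>n'$ and each $j\le k$ some $g\in\mathcal F_n$ satisfies $|g(x_j)-f(x_j)|<\varepsilon$. Zero-set: $g^{-1}(0)$, $g\in C(X)$; cozero-set: its complement. A cover $\mathcal U$ of $X$ always means $X=\bigcup\mathcal U$, $X\notin\mathcal U$; $\gamma$-cover: infinite, each point in all but finitely many members. $\Gamma_F$: $\gamma$-covers $\mathcal U$ of $X$ by cozero-sets for which there are zero-sets $F(U)\subseteq U$ ($U\in\mathcal U$) with $\{F(U):U\in\mathcal U\}$ a $\gamma$-cover of $X$. $X\models U_{fin}(\Gamma_F,\Gamma)$: whenever $\mathcal U_n\in\Gamma_F$ ($n\in\omega$) and no $\mathcal U_n$ contains a finite subcover, there are finite $\mathcal F_n\subseteq\mathcal U_n$ such that each point of $X$ belongs to $\bigcup\mathcal F_n$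 for all but finitely many $n$. *)

From Stdlib Require Import Reals List.
Open Scope R_scope.
Set Implicit Arguments.

Record Topology := {
  carrier :> Type;
  is_open : (carrier -> Prop) -> Prop;
  open_full : is_open (fun _ => True);
  open_union : forall F : (carrier -> Prop) -> Prop,
      (forall U, F U -> is_open U) -> is_open (fun x => exists U, F U /\ U x);
  open_inter : forall U V, is_open U -> is_open V -> is_open (fun x => U x /\ V x)
}.

Definition R_open (V : R -> Prop) : Prop :=
  forall y, V y -> exists d, d > 0 /\ forall z, Rabs (z - y) < d -> V z.

Definition continuous {X : Topology} (g : X -> R) : Prop :=
  forall V, R_open V -> is_open X (fun x => V (g x)).

Definition tychonoff (X : Topology) : Prop :=
  (forall x : X, is_open X (fun y => y <> x)) /\
  (forall (C : X -> Prop) (x : X), is_open X (fun y => ~ C y) -> ~ C x ->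
     exists g : X -> R, continuous g /\ g x = 0 /\
       (forall y, C y -> g y = 1) /\ (forall y, 0 <= g y <= 1)).

Definition finite {T : Type} (A : T -> Prop) : Prop :=
  exists l : list T, forall a, A a -> In a l.
Definition infinite {T : Type} (A : T -> Prop) : Prop := ~ finite A.

(** Gamma_f in C_p(X): infinite A ⊆ C(X), f ∉ A, every (basic) pointwise
    neighbourhood of f contains all but finitely many elements of A *)
Definition Gamma_f {X : Topology} (f : X -> R) (A : (X -> R) -> Prop) : Prop :=
  (forall g, A g -> continuous g) /\ infinite A /\ ~ A f /\
  (forall (K : list X) (eps : R), eps > 0 ->
     finite (fun g => A g /\ ~ (forall x, In x K -> Rabs (g x - f x) < eps))).

Definition Cp_Ufin_Gf (X : Topology) (f : X -> R) : Prop :=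
  forall S : nat -> ((X -> R) -> Prop), (forall n, Gamma_f f (S n)) ->
  exists F : nat -> list (X -> R),
    (forall n g, In g (F n) -> S n g) /\
    (forall (K : list X) (eps : R), eps > 0 ->
       exists n', forall n, (n > n')%nat -> forall x, In x K ->
         exists g, In g (F n) /\ Rabs (g x - f x) < eps).

Definition zero_set {X : Topology} (Z : X -> Prop) : Prop :=
  exists g : X -> R, continuous g /\ forall x, Z x <-> g x = 0.
Definition cozero_set {X : Topology} (V : X -> Prop) : Prop :=
  exists g : X -> R, continuous g /\ forall x, V x <-> g x <> 0.

Definition is_cover {X : Topology} (U : (X -> Prop) -> Prop) : Prop :=
  (forall x : X, exists V, U V /\ V x) /\ ~ (exists V, U V /\ forall x, V x).

Definition gamma_cover {X : Topology} (U : (X -> Prop) -> Prop) : Prop :=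
  is_cover U /\ infinite U /\ (forall x : X, finite (fun V => U V /\ ~ V x)).

Definition Gamma_F {X : Topology} (U : (X -> Prop) -> Prop) : Prop :=
  gamma_cover U /\ (forall V, U V -> cozero_set V) /\
  exists F : (X -> Prop) -> (X -> Prop),
    (forall V, U V -> zero_set (F V) /\ (forall x, F V x -> V x)) /\
    gamma_cover (fun W => exists V, U V /\ W = F V).

Definition has_finite_subcover {X : Topology} (U : (X -> Prop) -> Prop) : Prop :=
  exists l : list (X -> Prop), (forall V, In V l -> U V) /\
    forall x : X, exists V, In V l /\ V x.

Definition X_Ufin_GF_G (X : Topology) : Prop :=
  forall Us : nat -> ((X -> Prop) -> Prop),
    (forall n, Gamma_F (Us n)) -> (forall n, ~ has_finite_subcover (Us n)) ->
    exists F : nat -> list (X -> Prop),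
      (forall n V, In V (F n) -> Us n V) /\
      (forall x : X, exists N, forall n, (n >= N)%nat -> exists V, In V (F n) /\ V x).

(* Both directions translate between sequences converging pointwise and
   covers.  A gamma-cover by cozero sets V with zero sets F(V) inside yields,
   through functions g_V vanishing on F(V) with V = [g_V < 1], a sequence in
   C_p(X) converging to 0; a selection converging to 0 at each point selects
   members of the cover eventually containing each point.  Conversely, a
   sequence converging to f gives the cover by the sets [|g - f| < 1/(n+1)],
   which is a gamma_F cover with F(V) = [|g - f| <= 1/(2(n+1))] unless it has
   a finite subcover; a selection from these covers yields functions
   converging to f. *)
From Stdlib Require Import Reals List Lra Lia Classical ClassicalEpsilon
  IndefiniteDescription FunctionalExtensionality PropExtensionality.
Open Scope R_scope.

Lemma pred_ext {T : Type} (P Q : T -> Prop) : (forall x, P x <-> Q x) -> P = Q.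
Proof.
  intro E; apply functional_extensionality; intro x.
  apply propositional_extensionality, E.
Qed.

Lemma R_open_ball a d : R_open (fun z => Rabs (z - a) < d).
Proof.
  intros y Hy; exists (d - Rabs (y - a)); split; [lra|].
  intros z Hz; pose proof (Rabs_triang (z - y) (y - a)) as H.
  replace (z - y + (y - a)) with (z - a) in H by ring; lra.
Qed.

Lemma continuity_pt_identity x : continuity_pt (fun t => t) x.
Proof. apply derivable_continuous_pt, derivable_pt_id. Qed.

Section Continuity.

Context {X : Topology}.
Implicit Types g h : X -> R.

Lemma continuous_ext g h : continuous g -> (forall x, g x = h x) -> continuous h.
Proof. intros C E; replace h with g; [exact C | apply functional_extensionality, E]. Qed.

Lemma continuous_const (c : R) : continuous (fun _ : X => c).
Proof.
  intros V _; destruct (classic (V c)) as [Hc|Hc].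
  - replace (fun _ : X => V c) with (fun _ : X => True) by (apply pred_ext; tauto).
    apply open_full.
  - replace (fun _ : X => V c) with (fun x : X => exists U : X -> Prop, False /\ U x)
      by (apply pred_ext; firstorder).
    apply open_union; tauto.
Qed.

(* The preimage of an open set is the union of the open boxes
   [|g1 - a| < d] /\ [|g2 - b| < d] that [h] maps into it. *)
Lemma continuous_comp2 (k : R -> R -> R) g1 g2 :
  continuous g1 -> continuous g2 ->
  (forall x eps, eps > 0 -> exists d, d > 0 /\ forall u v,
     Rabs (u - g1 x) < d -> Rabs (v - g2 x) < d ->
     Rabs (k u v - k (g1 x) (g2 x)) < eps) ->
  continuous (fun x => k (g1 x) (g2 x)).
Proof.
  intros C1 C2 Hk V HV.
  set (Box := fun W : X -> Prop => exists a b d, d > 0 /\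
    (forall u v, Rabs (u - a) < d -> Rabs (v - b) < d -> V (k u v)) /\
    W = (fun x => Rabs (g1 x - a) < d /\ Rabs (g2 x - b) < d)).
  replace (fun x => V (k (g1 x) (g2 x))) with (fun x => exists W, Box W /\ W x).
  - apply open_union; intros W [a [b [d [_ [_ ->]]]]].
    apply open_inter; [apply (C1 _ (R_open_ball a d)) | apply (C2 _ (R_open_ball b d))].
  - apply pred_ext; intro x; split.
    + intros [W [[a [b [d [_ [HVk ->]]]]] [H1 H2]]]; auto.
    + intro Hx; destruct (HV _ Hx) as [e [He HVe]].
      destruct (Hk x e He) as [d [Hd Hkd]].
      exists (fun y => Rabs (g1 y - g1 x) < d /\ Rabs (g2 y - g2 x) < d); split.
      * exists (g1 x), (g2 x), d; repeat split; auto.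
      * rewrite !Rminus_diag, Rabs_R0; lra.
Qed.

Lemma continuous_comp (k : R -> R) g :
  continuous g -> (forall x, continuity_pt k (g x)) -> continuous (fun x => k (g x)).
Proof.
  intros C Hk; apply (continuous_comp2 (fun u _ => k u) g g C C).
  intros x eps Heps; destruct (Hk x eps Heps) as [d [Hd Hkd]].
  exists d; split; [exact Hd|]; intros u v Hu _.
  destruct (Req_dec u (g x)) as [->|Hne].
  - rewrite Rminus_diag, Rabs_R0; lra.
  - apply (Hkd u); repeat split; auto.
Qed.

Lemma continuous_plus g h : continuous g -> continuous h -> continuous (fun x => g x + h x).
Proof.
  intros Cg Ch; apply (continuous_comp2 Rplus g h Cg Ch).
  intros x eps Heps; exists (eps / 2); split; [lra|]; intros u v Hu Hv.
  replace (u + v - (g x + h x)) with ((u - g x) + (v - h x)) by ring.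
  pose proof (Rabs_triang (u - g x) (v - h x)); lra.
Qed.

Lemma continuous_scal (c : R) g : continuous g -> continuous (fun x => c * g x).
Proof.
  intro C; apply (continuous_comp (fun t => c * t) g C); intro x.
  apply (continuity_pt_scal (fun t => t)), continuity_pt_identity.
Qed.

Lemma continuous_minus g h : continuous g -> continuous h -> continuous (fun x => g x - h x).
Proof.
  intros Cg Ch; apply (continuous_ext (fun x => g x + -1 * h x)).
  - apply continuous_plus, continuous_scal; assumption.
  - intro x; ring.
Qed.

Lemma continuous_sq g : continuous g -> continuous (fun x => g x * g x).
Proof.
  intro C; apply (continuous_comp (fun t => t * t) g C); intro x.
  apply (continuity_pt_mult (fun t => t) (fun t => t)); apply continuity_pt_identity.
Qed.

(* Polarization: [4 g h = (g + h)^2 - (g - h)^2]. *)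
Lemma continuous_mult g h : continuous g -> continuous h -> continuous (fun x => g x * h x).
Proof.
  intros Cg Ch.
  apply (continuous_ext (fun x => / 4 * ((g x + h x) * (g x + h x) - (g x - h x) * (g x - h x)))).
  - apply continuous_scal, continuous_minus; apply continuous_sq;
      [apply continuous_plus | apply continuous_minus]; assumption.
  - intro x; field.
Qed.

Lemma continuous_abs g : continuous g -> continuous (fun x => Rabs (g x)).
Proof. intro C; apply (continuous_comp Rabs g C); intro x; apply Rcontinuity_abs. Qed.

Lemma continuous_inv g : continuous g -> (forall x, g x <> 0) -> continuous (fun x => / g x).
Proof.
  intros C H; apply (continuous_comp Rinv g C); intro x.
  apply (continuity_pt_inv (fun t => t)); [apply continuity_pt_identity | apply H].
Qed.

End Continuity.


Section ZeroSets.

Context {X : Topology}.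

Lemma cozero_set_of_pos (g : X -> R) (V : X -> Prop) :
  continuous g -> (forall x, V x <-> 0 < g x) -> cozero_set V.
Proof.
  intros C HV; exists (fun x => g x + Rabs (g x)); split.
  - apply continuous_plus, continuous_abs; assumption.
  - intro x; rewrite HV; unfold Rabs; destruct (Rcase_abs (g x)); split; intro; lra.
Qed.

Lemma zero_set_of_nonpos (g : X -> R) (Z : X -> Prop) :
  continuous g -> (forall x, Z x <-> g x <= 0) -> zero_set Z.
Proof.
  intros C HZ; exists (fun x => g x + Rabs (g x)); split.
  - apply continuous_plus, continuous_abs; assumption.
  - intro x; rewrite HZ; unfold Rabs; destruct (Rcase_abs (g x)); split; intro; lra.
Qed.

(* With [Z = [p = 0]] and [V = [q <> 0]], take [|p| / (|p| + |q|)]. *)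
Lemma zero_set_cozero_set_separation (Z V : X -> Prop) :
  zero_set Z -> cozero_set V -> (forall x, Z x -> V x) ->
  exists g : X -> R, continuous g /\ (forall x, Z x -> g x = 0) /\
    (forall x, V x <-> g x < 1).
Proof.
  intros [p [Cp Hp]] [q [Cq Hq]] ZV.
  assert (Hden : forall x, 0 < Rabs (p x) + Rabs (q x)).
  { intro x; pose proof (Rabs_pos (p x)); pose proof (Rabs_pos (q x)).
    destruct (classic (V x)) as [Vx|Vx].
    - apply Hq, Rabs_pos_lt in Vx; lra.
    - assert (p x <> 0) as Hpx by (rewrite <- Hp; auto).
      apply Rabs_pos_lt in Hpx; lra. }
  exists (fun x => Rabs (p x) * / (Rabs (p x) + Rabs (q x))); repeat split.
  - apply continuous_mult; [apply continuous_abs; assumption|].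
    apply continuous_inv; [apply continuous_plus; apply continuous_abs; assumption|].
    intro x; specialize (Hden x); lra.
  - intros x Zx; apply Hp in Zx; rewrite Zx, Rabs_R0; ring.
  - intro Vx; apply Hq, Rabs_pos_lt in Vx; specialize (Hden x).
    assert (0 < Rabs (q x) * / (Rabs (p x) + Rabs (q x)))
      by (apply Rmult_lt_0_compat; [lra | apply Rinv_0_lt_compat; lra]).
    replace (Rabs (p x) * / (Rabs (p x) + Rabs (q x)))
      with (1 - Rabs (q x) * / (Rabs (p x) + Rabs (q x))) by (field; lra); lra.
  - intro Hlt; apply NNPP; intro Vx.
    assert (q x = 0) as Hq0 by (apply NNPP; rewrite <- Hq; exact Vx).
    specialize (Hden x); rewrite Hq0, Rabs_R0, Rplus_0_r in Hden, Hlt.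
    rewrite Rinv_r in Hlt; lra.
Qed.

End ZeroSets.

Section FiniteFamilies.

Context {T U : Type}.

Lemma finite_incl (A B : T -> Prop) : finite A -> (forall a, B a -> A a) -> finite B.
Proof. intros [l Hl] H; exists l; auto. Qed.

Lemma finite_image (A : T -> Prop) (f : T -> U) :
  finite A -> finite (fun b => exists a, A a /\ b = f a).
Proof. intros [l Hl]; exists (map f l); intros b [a [Ha ->]]; apply in_map; auto. Qed.

Lemma finite_big_union (l : list U) (P : U -> T -> Prop) :
  (forall u, In u l -> finite (P u)) -> finite (fun a => exists u, In u l /\ P u a).
Proof.
  induction l as [|u l IH]; intro H.
  - exists nil; intros a [u [[] _]].
  - destruct (H u (or_introl eq_refl)) as [l1 H1].
    destruct IH as [l2 H2]; [intros v Hv; apply H; right; exact Hv|].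
    exists (l1 ++ l2); intros a [v [[<-|Hv] Ha]]; apply in_or_app; eauto.
Qed.

Lemma finite_enum {A : T -> Prop} :
  finite A -> exists l, (forall a, A a -> In a l) /\ (forall a, In a l -> A a).
Proof.
  intros [l Hl]; exists (filter (fun a => if excluded_middle_informative (A a) then true else false) l).
  split; intro a; rewrite filter_In;
    destruct (excluded_middle_informative (A a)); firstorder discriminate.
Qed.

Lemma infinite_exists (A Q : T -> Prop) :
  infinite A -> finite (fun a => A a /\ ~ Q a) -> exists a, A a /\ Q a.
Proof.
  intros HA HQ; apply NNPP; intro Hno; apply HA.
  apply (finite_incl _ _ HQ); intros a Ha; split; [exact Ha|]; intro; eauto.
Qed.

End FiniteFamilies.


Section Covers.

Context {X : Topology}.
Implicit Types U : (X -> Prop) -> Prop.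

Lemma no_full_member_of_no_finite_subcover {U} :
  ~ has_finite_subcover U -> ~ exists V, U V /\ forall x, V x.
Proof.
  intros Hno [V [HV Hall]]; apply Hno; exists (V :: nil); split.
  - intros W [<-|[]]; exact HV.
  - intro x; exists V; split; [left|]; auto.
Qed.

Lemma infinite_of_no_finite_subcover {U} :
  (forall x, exists V, U V /\ V x) -> ~ has_finite_subcover U -> infinite U.
Proof.
  intros Hcov Hno Hfin; destruct (finite_enum Hfin) as [l [Hin Hmem]].
  apply Hno; exists l; split; [exact Hmem|].
  intro x; destruct (Hcov x) as [V [HV Vx]]; exists V; auto.
Qed.

Lemma gamma_cover_image U (F : (X -> Prop) -> X -> Prop) :
  infinite U -> ~ (exists V, U V /\ forall x, V x) ->
  (forall V x, U V -> F V x -> V x) ->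
  (forall x, finite (fun V => U V /\ ~ F V x)) ->
  gamma_cover (fun W => exists V, U V /\ W = F V).
Proof.
  intros Uinf UnX FV Fmiss.
  assert (FnX : ~ exists W, (exists V, U V /\ W = F V) /\ forall x, W x).
  { intros [W [[V [HV ->]] Hall]]; apply UnX; exists V; split; [exact HV|].
    intro x; apply (FV V x HV (Hall x)). }
  repeat split.
  - intro x; destruct (infinite_exists U (fun V => F V x) Uinf (Fmiss x)) as [V [HV Fx]].
    exists (F V); split; [exists V; auto | exact Fx].
  - exact FnX.
  - intros [l Hl]; apply Uinf.
    apply (finite_incl (fun V => exists W, In W l /\ (U V /\ F V = W))).
    + apply finite_big_union; intros W _.
      destruct (classic (exists x, ~ W x)) as [[x Wx]|Hfull].
      * apply (finite_incl _ _ (Fmiss x)); intros V [HV <-]; auto.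
      * exists nil; intros V [HV <-]; exfalso; apply FnX.
        exists (F V); split; [exists V; auto|].
        intro x; apply NNPP; intro; apply Hfull; eauto.
    + intros V HV; exists (F V); split; [apply Hl; exists V; auto | auto].
  - intro x; apply (finite_incl _ _ (finite_image _ F (Fmiss x))).
    intros W [[V [HV ->]] Wx]; exists V; auto.
Qed.

End Covers.


Lemma Gamma_f_finite_far {X : Topology} {f : X -> R} {A : (X -> R) -> Prop} x {e} :
  Gamma_f f A -> e > 0 -> finite (fun g => A g /\ ~ Rabs (g x - f x) < e).
Proof.
  intros [_ [_ [_ HA]]] He; apply (finite_incl _ _ (HA (x :: nil) e He)).
  intros g [Ag Hfar]; split; [exact Ag|]; intro Hnear; apply Hfar, Hnear; left; auto.
Qed.


Definition ball_family {X : Topology} (f : X -> R) (A : (X -> R) -> Prop) (c : R)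
  : (X -> Prop) -> Prop :=
  fun V => exists g, A g /\ V = (fun x => Rabs (g x - f x) < c).

Section BallFamily.

Variables (X : Topology) (f : X -> R) (A : (X -> R) -> Prop) (c : R).
Hypotheses (Cf : continuous f) (HA : Gamma_f f A) (Hc : c > 0)
  (Hno : ~ has_finite_subcover (ball_family f A c)).

Lemma ball_family_covers x : exists V, ball_family f A c V /\ V x.
Proof.
  pose proof HA as [_ [Ainf _]].
  destruct (infinite_exists A (fun g => Rabs (g x - f x) < c) Ainf
              (Gamma_f_finite_far x HA Hc)) as [g [Ag Hg]].
  exists (fun y => Rabs (g y - f y) < c); split; [exists g; auto | exact Hg].
Qed.

Lemma ball_family_infinite : infinite (ball_family f A c).
Proof. exact (infinite_of_no_finite_subcover ball_family_covers Hno). Qed.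

Lemma ball_family_gamma_cover : gamma_cover (ball_family f A c).
Proof.
  replace (ball_family f A c)
    with (fun W => exists V, ball_family f A c V /\ W = (fun V => V) V).
  - apply gamma_cover_image.
    + exact ball_family_infinite.
    + exact (no_full_member_of_no_finite_subcover Hno).
    + auto.
    + intro x; apply (finite_incl _ _
        (finite_image _ (fun g y => Rabs (g y - f y) < c) (Gamma_f_finite_far x HA Hc))).
      intros V [[g [Ag ->]] Vx]; exists g; auto.
  - apply pred_ext; intro W; split; [intros [V [HV ->]]; exact HV | exists W; auto].
Qed.

Lemma ball_family_Gamma_F : Gamma_F (ball_family f A c).
Proof.
  destruct (functional_choice (fun V g => ball_family f A c V ->
              A g /\ V = (fun x => Rabs (g x - f x) < c))) as [center Hcenter].
  { intro V; destruct (classic (ball_family f A c V)) as [[g Hg]|HV];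
      [exists g; auto | exists f; tauto]. }
  assert (Cg : forall g, A g -> continuous g) by apply HA.
  split; [exact ball_family_gamma_cover | split].
  - intros V [g [Ag ->]].
    apply (cozero_set_of_pos (fun x => c - Rabs (g x - f x))); [|intro x; lra].
    apply continuous_minus; [apply continuous_const|].
    apply continuous_abs, continuous_minus; auto.
  - exists (fun V x => Rabs (center V x - f x) <= c / 2); split.
    + intros V HV; destruct (Hcenter V HV) as [Ag HVg]; split.
      * apply (zero_set_of_nonpos (fun x => Rabs (center V x - f x) - c / 2));
          [|intro x; lra].
        apply continuous_minus; [|apply continuous_const].
        apply continuous_abs, continuous_minus; auto.
      * intros x Hx; rewrite HVg; lra.
    + apply gamma_cover_image.
      * exact ball_family_infinite.
      * exact (no_full_member_of_no_finite_subcover Hno).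
      * intros V x HV Hx; destruct (Hcenter V HV) as [_ ->]; lra.
      * intro x; assert (Hc2 : c / 2 > 0) by lra.
        apply (finite_incl _ _
          (finite_image _ (fun g y => Rabs (g y - f y) < c) (Gamma_f_finite_far x HA Hc2))).
        intros V [HV Hfar]; destruct (Hcenter V HV) as [Ag HVg].
        exists (center V); repeat split; auto; lra.
Qed.

End BallFamily.

Definition eventually_covers {X : Topology} (L : nat -> list (X -> Prop)) : Prop :=
  forall x : X, exists N, forall n, (n >= N)%nat -> exists V, In V (L n) /\ V x.

Lemma eventually_covers_list {X : Topology} (L : nat -> list (X -> Prop)) (K : list X) :
  eventually_covers L ->
  exists N, forall n, (n >= N)%nat -> forall x, In x K -> exists V, In V (L n) /\ V x.
Proof.
  intro HL; induction K as [|y K [N1 H1]].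
  - exists 0%nat; intros n _ x [].
  - destruct (HL y) as [N2 H2]; exists (max N1 N2); intros n Hn x [<-|Hx].
    + apply H2; lia.
    + apply H1; [lia | exact Hx].
Qed.

(* The selection principle applied along the indices satisfying [P] only:
   the remaining indices are filled with a fixed [P]-index. *)
Lemma X_Ufin_GF_G_restrict {X : Topology} (Us : nat -> (X -> Prop) -> Prop) (P : nat -> Prop) :
  X_Ufin_GF_G X ->
  (forall n, P n -> Gamma_F (Us n) /\ ~ has_finite_subcover (Us n)) ->
  exists L : nat -> list (X -> Prop), (forall n V, P n -> In V (L n) -> Us n V) /\
    forall x, exists N, forall n, (n >= N)%nat -> P n -> exists V, In V (L n) /\ V x.
Proof.
  intros HX HP; destruct (classic (exists n0, P n0)) as [[n0 Pn0]|Hnone].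
  - set (Us' := fun n => if excluded_middle_informative (P n) then Us n else Us n0).
    destruct (HX Us') as [L [LUs' Lcov]];
      try (intro n; unfold Us'; destruct (excluded_middle_informative (P n)); apply HP; auto).
    exists L; split.
    + intros n V Pn HV; specialize (LUs' n V HV); unfold Us' in LUs'.
      destruct (excluded_middle_informative (P n)); tauto.
    + intro x; destruct (Lcov x) as [N HN]; exists N; auto.
  - exists (fun _ => nil); split.
    + intros n V _ [].
    + intro x; exists 0%nat; intros n _ Pn; exfalso; eauto.
Qed.

Lemma X_Ufin_GF_G_selection {X : Topology} (Us : nat -> (X -> Prop) -> Prop) :
  X_Ufin_GF_G X ->
  (forall n, ~ has_finite_subcover (Us n) -> Gamma_F (Us n)) ->
  exists L : nat -> list (X -> Prop), (forall n V, In V (L n) -> Us n V) /\ eventually_covers L.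
Proof.
  intros HX HG; set (P := fun n => ~ has_finite_subcover (Us n)).
  destruct (X_Ufin_GF_G_restrict Us P HX) as [L [LUs Lcov]]; [unfold P; auto|].
  destruct (functional_choice (fun n l => ~ P n ->
      (forall V, In V l -> Us n V) /\ forall x : X, exists V, In V l /\ V x)) as [sub Hsub].
  { intro n; destruct (classic (P n)) as [Pn|Pn];
      [exists nil; tauto | apply NNPP in Pn; destruct Pn as [l Hl]; exists l; auto]. }
  exists (fun n => if excluded_middle_informative (P n) then L n else sub n); split.
  - intros n V; destruct (excluded_middle_informative (P n)) as [Pn|Pn];
      [apply LUs, Pn | apply (Hsub n Pn)].
  - intro x; destruct (Lcov x) as [N HN]; exists N; intros n Hn.
    destruct (excluded_middle_informative (P n)) as [Pn|Pn]; [auto | apply (Hsub n Pn)].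
Qed.

Lemma Cp_Ufin_Gf_of_X_Ufin_GF_G {X : Topology} :
  X_Ufin_GF_G X -> forall f : X -> R, continuous f -> Cp_Ufin_Gf X f.
Proof.
  intros HX f Cf A HA.
  set (radius := fun n => / INR (S n)).
  assert (Hradius : forall n, radius n > 0)
    by (intro n; apply Rinv_0_lt_compat, lt_0_INR; lia).
  set (Us := fun n => ball_family f (A n) (radius n)).
  destruct (X_Ufin_GF_G_selection Us HX) as [L [LUs Lcov]].
  { intros n Hn; apply ball_family_Gamma_F; auto. }
  destruct (functional_choice (fun (p : nat * (X -> Prop)) g => Us (fst p) (snd p) ->
      A (fst p) g /\ snd p = (fun x => Rabs (g x - f x) < radius (fst p)))) as [center Hcenter].
  { intros [n V]; destruct (classic (Us n V)) as [[g Hg]|HV];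
      [exists g; auto | exists f; simpl; tauto]. }
  exists (fun n => map (fun V => center (n, V)) (L n)); split.
  - intros n g Hg; apply in_map_iff in Hg; destruct Hg as [V [<- HV]].
    apply (Hcenter (n, V)), LUs, HV.
  - intros K eps Heps.
    destruct (eventually_covers_list L K Lcov) as [N HN].
    destruct (archimed_cor1 eps Heps) as [M [HM HM0]].
    exists (max N M); intros n Hn x Hx.
    destruct (HN n ltac:(lia) x Hx) as [V [HV Vx]].
    exists (center (n, V)); split; [apply (in_map (fun V => center (n, V))), HV|].
    destruct (Hcenter (n, V) (LUs n V HV)) as [_ HVeq]; simpl in HVeq.
    rewrite HVeq in Vx.
    assert (radius n <= / INR M)
      by (apply Rinv_le_contravar; [apply lt_0_INR; lia | apply le_INR; lia]).
    lra.
Qed.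

(* One member [V] is kept for each set [W] of the shrunk cover, so that
   "finitely many [W] miss [x]" transfers to the functions [g_V]. *)
Lemma Gamma_F_to_Gamma_f_zero {X : Topology} (U : (X -> Prop) -> Prop) :
  Gamma_F U ->
  exists S : (X -> R) -> Prop, Gamma_f (fun _ => 0) S /\ forall g, S g -> U (fun x => g x < 1).
Proof.
  intros [[[_ UnX] _] [Ucz [F [HF [_ [Finf Fmiss]]]]]].
  set (FU := fun W => exists V, U V /\ W = F V).
  destruct (functional_choice (fun V g => U V -> continuous g /\
      (forall x, F V x -> g x = 0) /\ (forall x, V x <-> g x < 1))) as [G HG].
  { intro V; destruct (classic (U V)) as [HV|HV]; [|exists (fun _ => 0); tauto].
    destruct (HF V HV) as [FZ FV].
    destruct (zero_set_cozero_set_separation (F V) V FZ (Ucz V HV) FV) as [g Hg].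
    exists g; auto. }
  assert (Hlevel : forall V, U V -> V = (fun x => G V x < 1))
    by (intros V HV; apply pred_ext, (HG V HV)).
  destruct (functional_choice (fun W V => FU W -> U V /\ W = F V)) as [rep Hrep].
  { intro W; destruct (classic (FU W)) as [[V HV]|HW]; [exists V; auto | exists W; tauto]. }
  exists (fun g => exists W, FU W /\ g = G (rep W)); repeat split.
  - intros g [W [HW ->]]; apply (HG _ (proj1 (Hrep W HW))).
  - intros [l Hl]; apply Finf.
    exists (map (fun g => F (fun x => g x < 1)) l); intros W HW.
    destruct (Hrep W HW) as [HV HWV]; apply in_map_iff.
    exists (G (rep W)); split; [rewrite <- Hlevel; auto | apply Hl; exists W; auto].
  - intros [W [HW E]]; destruct (Hrep W HW) as [HV _].
    apply UnX; exists (rep W); split; [exact HV|].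
    intro x; rewrite (Hlevel _ HV), <- E; lra.
  - intros K eps Heps.
    apply (finite_incl (fun g => exists W, (exists x, In x K /\ (FU W /\ ~ W x)) /\
                                          g = (fun W => G (rep W)) W)).
    + apply finite_image, finite_big_union; intros x _; apply Fmiss.
    + intros g [[W [HW ->]] Hfar]; exists W; split; [|reflexivity].
      apply NNPP; intro Hnear; apply Hfar; intros x Hx.
      destruct (Hrep W HW) as [HV HWV].
      assert (Wx : F (rep W) x)
        by (rewrite <- HWV; apply NNPP; intro; apply Hnear; exists x; auto).
      rewrite (proj1 (proj2 (HG _ HV)) x Wx), Rminus_diag, Rabs_R0; lra.
  - intros g [W [HW ->]]; destruct (Hrep W HW) as [HV _]; rewrite <- Hlevel; auto.
Qed.

Lemma X_Ufin_GF_G_of_Cp_Ufin_Gf {X : Topology} :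
  (forall f : X -> R, continuous f -> Cp_Ufin_Gf X f) -> X_Ufin_GF_G X.
Proof.
  intros HCp Us HG _.
  destruct (functional_choice (fun n A => Gamma_f (fun _ => 0) A /\
      forall g, A g -> Us n (fun x => g x < 1))) as [A HA].
  { intro n; apply Gamma_F_to_Gamma_f_zero, HG. }
  destruct (HCp (fun _ => 0) (continuous_const 0) A (fun n => proj1 (HA n)))
    as [L [LA Lconv]].
  exists (fun n => map (fun g x => g x < 1) (L n)); split.
  - intros n V HV; apply in_map_iff in HV; destruct HV as [g [<- Hg]].
    apply (HA n), LA, Hg.
  - intro x; destruct (Lconv (x :: nil) 1 Rlt_0_1) as [N HN].
    exists (S N); intros n Hn.
    destruct (HN n ltac:(lia) x (or_introl eq_refl)) as [g [Hg Hgx]].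
    exists (fun y => g y < 1); split; [apply (in_map (fun g x => g x < 1)), Hg|].
    rewrite Rminus_0_r in Hgx; pose proof (Rle_abs (g x)); lra.
Qed.

Theorem mainTheorem15 (X : Topology) (HX : tychonoff X) :
  (forall f : X -> R, continuous f -> Cp_Ufin_Gf X f) <-> X_Ufin_GF_G X.
Proof.
  split.
  - apply X_Ufin_GF_G_of_Cp_Ufin_Gf.
  - apply Cp_Ufin_Gf_of_X_Ufin_GF_G.
Qed.
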